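(* Let $G_1,\dots,G_n$ be groups and $G=G_1\times\cdots\times G_n$. Suppose that either every automorphism of $G$ has upper triangular matrix (i.e. $\phi_{ij}$ trivial for all $i>j$), or every automorphism of $G$ has lower triangular matrix (i.e. $\phi_{ij}$ trivial for all $i<j$). Then for every $\phi\in\operatorname{Aut}(G)$ with matrix $(\phi_{ij})_{ij}$ we have $\phi_{ii}\in\operatorname{Aut}(G_i)$ for each $i$, and $\phi_{ij}\in\operatorname{Hom}(G_j,Z(G_i))$ for all $i\neq j$.
   Context: The matrix of an endomorphism $\phi$ of $G$ is $(\phi_{ij})_{ij}$ with $\phi_{ij}=\pi_i\circ\phi\circ e_j\in\operatorname{Hom}(G_j,G_i)$, $\pi_i$ the canonical projection and $e_j$ the canonical inclusion; composition of endomorphisms corresponds to matrix multiplication $(\phi\psi)_{ij}=\prod_k \phi_{ik}\circ\psi_{kj}$ (pointwise product of homomorphisms with commuting images). *)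

From Stdlib Require Import FunctionalExtensionality.
From mathcomp Require Import all_boot.
Set Implicit Arguments. Unset Strict Implicit. Unset Printing Implicit Defensive.

Record Grp := MkGrp {
  carrier :> Type;
  gmul : carrier -> carrier -> carrier;
  gone : carrier;
  ginv : carrier -> carrier;
  gmulA : forall x y z, gmul x (gmul y z) = gmul (gmul x y) z;
  gmul1 : forall x, gmul gone x = x;
  gmulV : forall x, gmul (ginv x) x = gone }.

Definition is_hom (G H : Grp) (f : G -> H) : Prop :=
  forall x y, f (gmul x y) = gmul (f x) (f y).
Definition is_aut (G : Grp) (f : G -> G) : Prop := is_hom f /\ bijective f.

Definition in_center (G : Grp) (z : G) : Prop := forall h : G, gmul z h = gmul h z.

Section Prod.
Variables (n : nat) (G : 'I_n -> Grp).
Definition prod_car := forall i : 'I_n, G i.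
Definition prod_mul (x y : prod_car) : prod_car := fun i => gmul (x i) (y i).
Definition prod_one : prod_car := fun i => gone (G i).
Definition prod_inv (x : prod_car) : prod_car := fun i => ginv (x i).
Lemma prod_mulA x y z : prod_mul x (prod_mul y z) = prod_mul (prod_mul x y) z.
Proof. apply: FunctionalExtensionality.functional_extensionality_dep => i; exact: gmulA. Qed.
Lemma prod_mul1 x : prod_mul prod_one x = x.
Proof. apply: FunctionalExtensionality.functional_extensionality_dep => i; exact: gmul1. Qed.
Lemma prod_mulV x : prod_mul (prod_inv x) x = prod_one.
Proof. apply: FunctionalExtensionality.functional_extensionality_dep => i; exact: gmulV. Qed.
Definition prodGrp : Grp := MkGrp prod_mulA prod_mul1 prod_mulV.

Definition proj (i : 'I_n) (x : prodGrp) : G i := x i.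
Definition incl (j : 'I_n) (g : G j) : prodGrp :=
  fun k => match j =P k with
           | ReflectT e => eq_rect j (fun t => G t) g k e
           | ReflectF _ => gone (G k)
           end.

Definition mx_entry (phi : prodGrp -> prodGrp) (i j : 'I_n) : G j -> G i :=
  fun g => proj i (phi (incl g)).

Definition trivial_hom (H K : Grp) (f : H -> K) : Prop := forall g, f g = gone K.
End Prod.
Arguments mx_entry {n G} phi i j _.
Arguments incl {n G} j g _.
Arguments proj {n G} i x.

From Stdlib Require Import FunctionalExtensionality.
From mathcomp Require Import all_boot.
Set Implicit Arguments. Unset Strict Implicit. Unset Printing Implicit Defensive.

(* Let phi be an automorphism of G = G_1 x ... x G_n with inverse
   psi; psi is again an automorphism, so it has the same triangular shape.
   Write phi(e_i a) = e_i(phi_ii a) * y, where y has trivial i-th coordinate.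
   For every k <> i, either phi_ki is trivial (so y_k = 1) or psi_ik is
   trivial; hence the i-th coordinate of psi y vanishes and
   a = (psi (phi (e_i a)))_i = psi_ii (phi_ii a).  By symmetry
   phi_ii o psi_ii = id too, so phi_ii is bijective, and it is a homomorphism
   as is every entry of an endomorphism.  Finally, for any endomorphism and
   j <> i, e_j g and e_i h commute in G, so phi_ij g commutes with phi_ii h;
   as phi_ii is onto, phi_ij g is central in G_i. *)

(* Right identity, derived from the left-sided axioms of [Grp]. *)
Lemma gmulr1 (H : Grp) (x : H) : gmul x (gone H) = x.
Proof.
have mulrV : gmul x (ginv x) = gone H.
  rewrite -[gmul x _]gmul1 -(gmulV (ginv x)) -gmulA (gmulA (ginv x)) gmulV gmul1.
  by rewrite gmulV.
by rewrite -(gmulV x) gmulA mulrV gmul1.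
Qed.

Lemma idempotent_one (H : Grp) (p : H) : gmul p p = p -> p = gone H.
Proof. by move=> pp; rewrite -(gmulV p) -{3}pp gmulA gmulV gmul1. Qed.

Lemma hom_one (H K : Grp) (f : H -> K) : is_hom f -> f (gone H) = gone K.
Proof. by move=> fM; apply: idempotent_one; rewrite -fM gmul1. Qed.

Lemma inverse_aut (H : Grp) (phi : H -> H) : is_aut phi ->
  exists psi : H -> H, [/\ is_aut psi, cancel phi psi & cancel psi phi].
Proof.
move=> [phiM [psi phiK psiK]]; exists psi; split => //; split; last by exists phi.
by move=> u v; apply: (can_inj phiK); rewrite phiM !psiK.
Qed.

Section Coordinates.
Variables (n : nat) (G : 'I_n -> Grp).

Lemma incl_eq (j : 'I_n) (g : G j) : incl j g j = g.
Proof. by rewrite /incl; case: (j =P j) => [e|//]; rewrite (eq_irrelevance e erefl). Qed.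

Lemma incl_neq (j k : 'I_n) (g : G j) : j != k -> incl j g k = gone (G k).
Proof. by move=> /eqP jk; rewrite /incl; case: (j =P k). Qed.

Lemma incl_hom (j : 'I_n) : is_hom (@incl n G j).
Proof.
move=> u v; apply: functional_extensionality_dep => k /=; rewrite /prod_mul.
by case: (eqVneq j k) => [<-|jk]; rewrite ?incl_eq // !incl_neq // gmul1.
Qed.

Lemma incl_commute (i j : 'I_n) (g : G j) (h : G i) : i != j ->
  gmul (incl j g) (incl i h) = gmul (incl i h) (incl j g) :> prodGrp G.
Proof.
move=> ij; apply: functional_extensionality_dep => k /=; rewrite /prod_mul.
case: (eqVneq j k) => [<-|jk]; first by rewrite incl_eq incl_neq // gmul1 gmulr1.
by rewrite (incl_neq _ jk) gmul1 gmulr1.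
Qed.

Definition erase (i : 'I_n) (x : prodGrp G) : prodGrp G :=
  fun k => if k == i then gone (G k) else x k.

Lemma split_coord (i : 'I_n) (x : prodGrp G) :
  x = gmul (incl i (x i)) (erase i x).
Proof.
apply: functional_extensionality_dep => k /=; rewrite /prod_mul /erase.
case: eqP => [->|/eqP ki]; first by rewrite incl_eq gmulr1.
by rewrite incl_neq 1?eq_sym // gmul1.
Qed.

Lemma entry_hom (phi : prodGrp G -> prodGrp G) (i j : 'I_n) :
  is_hom phi -> is_hom (mx_entry phi i j).
Proof. by move=> phiM u v; rewrite /mx_entry incl_hom phiM. Qed.

Lemma row_vanishes (psi : prodGrp G -> prodGrp G) (i : 'I_n) (y : prodGrp G) :
  is_hom psi ->
  (forall k, y k = gone (G k) \/ trivial_hom (mx_entry psi i k)) ->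
  proj i (psi y) = gone (G i).
Proof.
(* Induction on a list [s] of indices outside of which [y] is trivial,
   peeling off one coordinate at a time with [split_coord]. *)
move=> psiM; have: forall k, k \notin enum 'I_n -> y k = gone (G k).
  by move=> k; rewrite mem_enum.
elim: (enum 'I_n) y => [|a s IHs] y ys yrow.
  have -> : y = gone (prodGrp G) by apply: functional_extensionality_dep => k; apply: ys.
  by rewrite hom_one.
rewrite [y](split_coord a) psiM /proj /= /prod_mul.
have -> : psi (incl a (y a)) i = gone (G i).
  by case: (yrow a) => [->|/(_ (y a)) //]; rewrite (hom_one (incl_hom (j := a))) hom_one.
rewrite gmul1; apply: IHs => k; rewrite /erase; case: eqP => [_|/eqP ka].
- by [].
- by move=> ks; apply: ys; rewrite in_cons negb_or ka.
- by left.
- exact: yrow.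
Qed.

Lemma entries_commute (phi : prodGrp G -> prodGrp G) (i j : 'I_n)
    (g : G j) (h : G i) : is_hom phi -> i != j ->
  gmul (mx_entry phi i j g) (mx_entry phi i i h)
  = gmul (mx_entry phi i i h) (mx_entry phi i j g).
Proof.
move=> phiM ij; have := f_equal (fun z => phi z i) (incl_commute g h ij).
by rewrite /= !phiM.
Qed.

Section Triangular.

(* A triangularity pattern: [R k i] says that entry (k, i) is trivial for
   every automorphism, and any two distinct indices are comparable. *)
Variable R : 'I_n -> 'I_n -> bool.
Hypothesis R_trivial : forall phi : prodGrp G -> prodGrp G, is_aut phi ->
  forall i j, R i j -> trivial_hom (mx_entry phi i j).
Hypothesis R_total : forall i k : 'I_n, k != i -> R k i || R i k.

Lemma diag_inverse (phi psi : prodGrp G -> prodGrp G) (i : 'I_n) :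
  is_aut phi -> is_aut psi -> cancel phi psi ->
  cancel (mx_entry phi i i) (mx_entry psi i i).
Proof.
move=> phiA psiA phiK a; set x := phi (incl i a).
have := f_equal (fun z => proj i (psi z)) (split_coord i x).
rewrite /= /x phiK /proj incl_eq (proj1 psiA) /= /prod_mul.
have -> : psi (erase i x) i = gone (G i).
  apply: (row_vanishes (proj1 psiA)) => k; rewrite /erase.
  case: eqP => [_|/eqP ki]; first by left.
  case/orP: (R_total ki) => [Rki|Rik]; last by right; apply: R_trivial.
  by left; apply: (R_trivial phiA Rki).
by rewrite gmulr1 => decomp; rewrite {2}decomp.
Qed.

Lemma triangular_aut_entries (phi : prodGrp G -> prodGrp G) : is_aut phi ->
    (forall i : 'I_n, is_aut (mx_entry phi i i)) /\
    (forall i j : 'I_n, i != j ->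
       is_hom (mx_entry phi i j) /\ (forall g : G j, in_center (mx_entry phi i j g))).
Proof.
move=> phiA; have [psi [psiA phiK psiK]] := inverse_aut phiA.
have diag_bij i : bijective (mx_entry phi i i).
  by exists (mx_entry psi i i); apply: diag_inverse.
split=> [i|i j ij]; first by split; [apply: entry_hom; case: phiA | apply: diag_bij].
split=> [|g h]; first by apply: entry_hom; case: phiA.
have [f _ fK] := diag_bij i.
by rewrite -(fK h) entries_commute //; case: phiA.
Qed.

End Triangular.

End Coordinates.

Theorem mainTheorem3 (n : nat) (G : 'I_n -> Grp) :
  ((forall phi : prodGrp G -> prodGrp G, is_aut phi ->
      forall i j : 'I_n, (j < i)%N -> trivial_hom (mx_entry phi i j)) \/
   (forall phi : prodGrp G -> prodGrp G, is_aut phi ->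
      forall i j : 'I_n, (i < j)%N -> trivial_hom (mx_entry phi i j))) ->
  forall phi : prodGrp G -> prodGrp G, is_aut phi ->
    (forall i : 'I_n, is_aut (mx_entry phi i i)) /\
    (forall i j : 'I_n, i != j ->
       is_hom (mx_entry phi i j) /\ (forall g : G j, in_center (mx_entry phi i j g))).
Proof.
case=> [upper|lower].
- apply: (triangular_aut_entries (R := fun i j : 'I_n => (j < i)%N)) => // i k ki.
  by rewrite orbC -neq_ltn.
- apply: (triangular_aut_entries (R := fun i j : 'I_n => (i < j)%N)) => // i k ki.
  by rewrite -neq_ltn.
Qed.
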